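(* Let $U\le B$ be positive integers, $P>0$, $\mathbf{H}\in\mathbb{C}^{U\times B}$, and $\mathbf{s}\in\mathbb{C}^U$ with $\mathbf{s}\neq\mathbf{0}$. Set $$\mathbf{Q}=\mathbf{I}_U-\frac{\mathbf{s}\mathbf{s}^H}{\|\mathbf{s}\|_2^2},\qquad \mathbf{A}=\mathbf{Q}\mathbf{H}\in\mathbb{C}^{U\times B},$$ and let $\ell=\sqrt{P/(2B)}$ and $$\mathcal{B}^B=\{\mathbf{c}\in\mathbb{C}^B:\ |\mathrm{Re}\{c_b\}|\le \ell,\ |\mathrm{Im}\{c_b\}|\le \ell,\ b=1,\dots,B\}.$$ Fix parameters $0<\delta<\gamma$. Consider the problem (BCR$^*$) $$\min_{\mathbf{x}\in\mathcal{B}^B,\ \mathbf{z}\in\mathbb{C}^B}\ E(\mathbf{z},\mathbf{x}),\qquad E(\mathbf{z},\mathbf{x})=\|\mathbf{A}\mathbf{z}\|_2^2+\gamma\|\mathbf{z}-\mathbf{x}\|_2^2-\delta\|\mathbf{x}\|_2^2 .$$ Define the sequence (algorithm C1PO) by $\mathbf{x}^{(1)}=\mathbf{H}^H\mathbf{s}$ and, for $t=1,2,\dots$, $$\mathbf{z}^{(t+1)}=(\mathbf{I}_B+\gamma^{-1}\mathbf{A}^H\mathbf{A})^{-1}\mathbf{x}^{(t)},\qquad \mathbf{x}^{(t+1)}=\mathrm{proj}(\mathbf{z}^{(t+1)}),$$ where $\mathrm{proj}$ acts entrywise as $$\mathrm{proj}(z)=\mathrm{sgn}(\mathrm{Re}\{z\})\min\Big\{\tfrac{\gamma}{\gamma-\delta}|\mathrm{Re}\{z\}|,\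 \ell\Big\}+j\,\mathrm{sgn}(\mathrm{Im}\{z\})\min\Big\{\tfrac{\gamma}{\gamma-\delta}|\mathrm{Im}\{z\}|,\ \ell\Big\}.$$ Then any limit point of the sequence $\{(\mathbf{x}^{(t)},\mathbf{z}^{(t)})\}$ is a stationary point of (BCR$^*$).
   Context: $\mathrm{sgn}(a)=+1$ for $a\ge 0$ and $-1$ for $a<0$; $j$ is the imaginary unit. Complex vectors are identified with real vectors of twice the dimension (real and imaginary parts), with real inner product $\mathrm{Re}\{\mathbf{u}^H\mathbf{v}\}$. A stationary point of (BCR$^*$) is a pair $(\mathbf{z}^\star,\mathbf{x}^\star)$ with $\mathbf{x}^\star\in\mathcal{B}^B$ satisfying the first-order optimality conditions: the gradient of $E$ with respect to $\mathbf{z}$ vanishes at $(\mathbf{z}^\star,\mathbf{x}^\star)$, and the negative gradient of $E$ with respect to $\mathbf{x}$ at $(\mathbf{z}^\star,\mathbf{x}^\star)$ lies in the normal cone of the convex set $\mathcal{B}^B$ at $\mathbf{x}^\star$. *)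

From mathcomp Require Import all_boot all_order all_algebra.
From mathcomp Require Import reals normedtype derive.
From mathcomp Require Export complex.
Set Implicit Arguments. Unset Strict Implicit. Unset Printing Implicit Defensive.
Import Order.TTheory GRing.Theory Num.Theory numFieldNormedType.Exports.
Local Open Scope ring_scope.
Local Open Scope complex_scope.

Section C1PO.
Variable R : realType.
Local Notation C := R[i].

Definition adj m n (M : 'M[C]_(m, n)) : 'M[C]_(n, m) := (map_mx conjc M)^T.

Definition rinner n (u v : 'cV[C]_n) : R := complex.Re ((adj u *m v) 0 0).

Definition sqnorm n (v : 'cV[C]_n) : R := rinner v v.

Definition sgn (a : R) : R := if 0 <= a then 1 else -1.

Definition inbox n (ell : R) (c : 'cV[C]_n) : Prop :=
  forall b : 'I_n, `|complex.Re (c b 0)| <= ell /\ `|complex.Im (c b 0)| <= ell.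

Definition Qmat U (s : 'cV[C]_U) : 'M[C]_U :=
  1%:M - ((sqnorm s)^-1)%:C *: (s *m adj s).

Definition energy U n (A : 'M[C]_(U, n)) (gamma delta : R) (z x : 'cV[C]_n) : R :=
  sqnorm (A *m z) + gamma * sqnorm (z - x) - delta * sqnorm x.

Definition c1po_proj1 (gamma delta ell a : R) : R :=
  sgn a * Num.min (gamma / (gamma - delta) * `|a|) ell.

Definition c1po_projc (gamma delta ell : R) (w : C) : C :=
  (c1po_proj1 gamma delta ell (complex.Re w)) +i* (c1po_proj1 gamma delta ell (complex.Im w)).

Definition c1po_proj n (gamma delta ell : R) (v : 'cV[C]_n) : 'cV[C]_n :=
  \col_(b < n) c1po_projc gamma delta ell (v b 0).

(* g is the gradient of f : C^n -> R at p, C^n viewed as R^{2n} with the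
   real inner product Re{u^H v}: every directional derivative of f at p
   along a real direction v equals <g, v>. *)
Definition is_gradient n (f : 'cV[C]_n -> R) (p g : 'cV[C]_n) : Prop :=
  forall v : 'cV[C]_n,
    is_derive (0 : R) (1 : R) (fun h : R => f (p + h%:C *: v)) (rinner g v).

Definition normal_cone n (S : 'cV[C]_n -> Prop) (x g : 'cV[C]_n) : Prop :=
  forall y, S y -> rinner g (y - x) <= 0.

Definition stationary U n (A : 'M[C]_(U, n)) (gamma delta ell : R)
    (zs xs : 'cV[C]_n) : Prop :=
  inbox ell xs /\
  (exists gz, is_gradient (fun z => energy A gamma delta z xs) zs gz /\ gz = 0) /\
  (exists gx, is_gradient (fun x => energy A gamma delta zs x) xs gx /\
              normal_cone (inbox ell) xs (- gx)).

Definition limit_point n (x z : nat -> 'cV[C]_n) (xs zs : 'cV[C]_n) : Prop :=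
  forall eps : R, 0 < eps -> forall N : nat, exists t : nat,
    (N <= t)%N /\ sqnorm (x t - xs) + sqnorm (z t - zs) < eps.

End C1PO.

(* C1PO is block-coordinate descent on E.  The z-update solves the normal
   equation (I + A^H A / gamma) z = x of the convex quadratic E(., x), and the
   x-update minimises E(z, .) over the box: the problem separates into scalar
   problems min gamma (q - a)^2 - delta q^2 on [-ell, ell], whose solution is the
   clipped gain gamma / (gamma - delta).  Since gamma > delta the x-problem is
   (gamma - delta)-strongly convex, so every sweep decreases E by at least
   (gamma - delta) ||x(t) - x(t+1)||^2; E is bounded below on the box, hence
   consecutive x-iterates merge.  Both updates are Lipschitz, so at a limit point
   each of them is at a fixed point, and a simultaneous fixed point of the two
   exact block minimisations satisfies the first-order conditions. *)

From mathcomp Require Import all_boot all_order all_algebra.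
From mathcomp Require Import classical_sets boolp reals normedtype derive.
From mathcomp Require Import complex.
From mathcomp Require Import ring lra.
Set Implicit Arguments. Unset Strict Implicit. Unset Printing Implicit Defensive.
Import Order.TTheory GRing.Theory Num.Theory numFieldNormedType.Exports.
Local Open Scope ring_scope.
Local Open Scope complex_scope.

Section Clip.
Variables (R : realType) (g d l : R).
Local Notation clip := (c1po_proj1 g d l).
Local Notation k := (g / (g - d)).

Lemma c1po_gain_gt0 : 0 < d -> d < g -> 0 < k.
Proof. by move=> d_gt0 d_lt_g; apply: divr_gt0; lra. Qed.

Lemma c1po_gainE a : d < g -> (g - d) * (k * a) = g * a.
Proof. by move=> d_lt_g; rewrite mulrCA mulrA divfK // subr_eq0 gt_eqF. Qed.

Lemma c1po_proj1_cases a : 0 < d -> d < g ->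
  [\/ clip a = k * a /\ - l <= k * a <= l,
      clip a = l /\ l <= k * a
    | clip a = - l /\ k * a <= - l].
Proof.
move=> d_gt0 d_lt_g; have k_gt0 := c1po_gain_gt0 d_gt0 d_lt_g.
rewrite /c1po_proj1 /sgn; case: ifP => a_ge0.
- have ka_ge0 : 0 <= k * a by rewrite mulr_ge0 // ltW.
  rewrite ger0_norm // mul1r minEle; case: leP => [kal|lka].
  + by constructor 1; split=> //; apply/andP; split; lra.
  + by constructor 2; split=> //; exact: ltW.
- have a_lt0 : a < 0 by rewrite ltNge a_ge0.
  have ka_lt0 : k * a < 0 by rewrite pmulr_rlt0.
  rewrite ltr0_norm // mulrN mulN1r minEle; case: leP => [kal|lka].
  + by rewrite opprK; constructor 1; split=> //; apply/andP; split; lra.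
  + by constructor 3; split=> //; lra.
Qed.

Lemma c1po_proj1_bound a : 0 < d -> d < g -> 0 <= l -> `|clip a| <= l.
Proof.
move=> d_gt0 d_lt_g l_ge0; rewrite ler_norml.
by case: (c1po_proj1_cases a d_gt0 d_lt_g) => [[-> /andP[]]|[->]|[->]]; lra.
Qed.

(* First-order optimality of [clip a] for q |-> g (q - a)^2 - d q^2 on [-l, l]. *)
Lemma c1po_proj1_first_order a q : 0 < d -> d < g -> `|q| <= l ->
  0 <= (2 * g * (clip a - a) - 2 * d * clip a) * (q - clip a).
Proof.
move=> d_gt0 d_lt_g; rewrite ler_norml => /andP[q_ge q_le].
have gd_gt0 : 0 < g - d by lra.
have ka := c1po_gainE a d_lt_g.
case: (c1po_proj1_cases a d_gt0 d_lt_g) => [[-> _]|[-> l_le]|[-> le_l]].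
- have -> : 2 * g * (k * a - a) - 2 * d * (k * a) = 2 * ((g - d) * (k * a) - g * a) by ring.
  by rewrite ka subrr mulr0 mul0r.
- have : (g - d) * l <= g * a by rewrite -ka ler_pM2l.
  nra.
- have : g * a <= (g - d) * - l by rewrite -ka ler_pM2l.
  nra.
Qed.

Lemma c1po_proj1_lipschitz a b : 0 < d -> d < g -> 0 <= l ->
  (clip a - clip b) ^+ 2 <= k ^+ 2 * (a - b) ^+ 2.
Proof.
move=> d_gt0 d_lt_g l_ge0; rewrite -exprMn mulrBr.
suff : 0 <= clip a - clip b <= k * a - k * b \/ k * a - k * b <= clip a - clip b <= 0.
  by case=> /andP[]; nra.
case: (c1po_proj1_cases a d_gt0 d_lt_g) => [[-> /andP[]]|[->]|[->]];
case: (c1po_proj1_cases b d_gt0 d_lt_g) => [[-> /andP[]]|[->]|[->]];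
  have [|] := lerP (k * b) (k * a); (try by left; apply/andP; split; lra);
  by right; apply/andP; split; lra.
Qed.

End Clip.

Section RealInnerProduct.
Variable R : realType.
Local Notation C := R[i].
Implicit Types (a b : C) (n : nat).

Lemma ReD a b : complex.Re (a + b) = complex.Re a + complex.Re b.
Proof. by case: a; case: b. Qed.

Lemma ImD a b : complex.Im (a + b) = complex.Im a + complex.Im b.
Proof. by case: a; case: b. Qed.

Lemma ReN a : complex.Re (- a) = - complex.Re a.
Proof. by case: a. Qed.

Lemma ImN a : complex.Im (- a) = - complex.Im a.
Proof. by case: a. Qed.

Lemma ReZ (c : R) a : complex.Re (c%:C * a) = c * complex.Re a.
Proof. by case: a => a1 a2; simpc. Qed.

Lemma ImZ (c : R) a : complex.Im (c%:C * a) = c * complex.Im a.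
Proof. by case: a => a1 a2; simpc. Qed.

Lemma Re_conjM a b :
  complex.Re (a^* * b) = complex.Re a * complex.Re b + complex.Im a * complex.Im b.
Proof. by case: a => a1 a2; case: b => b1 b2; simpc; rewrite /=; ring. Qed.

Lemma Re_sum n (F : 'I_n -> C) : complex.Re (\sum_i F i) = \sum_i complex.Re (F i).
Proof. by elim/big_rec2: _ => // i y1 y2 _ <-; rewrite ReD. Qed.

Lemma rinnerE n (u v : 'cV[C]_n) : rinner u v =
  \sum_i (complex.Re (u i 0) * complex.Re (v i 0) + complex.Im (u i 0) * complex.Im (v i 0)).
Proof. by rewrite /rinner !mxE Re_sum; apply: eq_bigr => i _; rewrite /adj !mxE Re_conjM. Qed.

Lemma sqnormE n (u : 'cV[C]_n) :
  sqnorm u = \sum_i (complex.Re (u i 0) ^+ 2 + complex.Im (u i 0) ^+ 2).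
Proof. by rewrite /sqnorm rinnerE; apply: eq_bigr => i _; rewrite !expr2. Qed.

Variable n : nat.
Implicit Types (u v w : 'cV[C]_n).

Lemma rinnerC u v : rinner u v = rinner v u.
Proof. by rewrite !rinnerE; apply: eq_bigr => i _; ring. Qed.

Lemma rinnerDl u v w : rinner (u + v) w = rinner u w + rinner v w.
Proof. by rewrite !rinnerE -big_split; apply: eq_bigr => i _ /=; rewrite !mxE ReD ImD; ring. Qed.

Lemma rinnerNl u w : rinner (- u) w = - rinner u w.
Proof. by rewrite !rinnerE -sumrN; apply: eq_bigr => i _ /=; rewrite !mxE ReN ImN; ring. Qed.

Lemma rinnerZl (c : R) u w : rinner (c%:C *: u) w = c * rinner u w.
Proof. by rewrite !rinnerE mulr_sumr; apply: eq_bigr => i _ /=; rewrite !mxE ReZ ImZ; ring. Qed.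

Lemma rinnerBl u v w : rinner (u - v) w = rinner u w - rinner v w.
Proof. by rewrite rinnerDl rinnerNl. Qed.

Lemma rinnerDr u v w : rinner w (u + v) = rinner w u + rinner w v.
Proof. by rewrite rinnerC rinnerDl !(rinnerC w). Qed.

Lemma rinnerNr u w : rinner w (- u) = - rinner w u.
Proof. by rewrite rinnerC rinnerNl rinnerC. Qed.

Lemma rinnerZr (c : R) u w : rinner w (c%:C *: u) = c * rinner w u.
Proof. by rewrite rinnerC rinnerZl rinnerC. Qed.

Lemma rinner0l w : rinner 0 w = 0.
Proof. by rewrite -(scale0r 0) -[0 : C]/((0 : R)%:C) rinnerZl mul0r. Qed.

Lemma sqnorm_ge0 u : 0 <= sqnorm u.
Proof. by rewrite sqnormE; apply: sumr_ge0 => i _; rewrite addr_ge0 ?sqr_ge0. Qed.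

Lemma sqnorm_eq0 u : sqnorm u = 0 -> u = 0.
Proof.
rewrite sqnormE => /eqP; rewrite psumr_eq0 => [/allP u0|i _]; last by rewrite addr_ge0 ?sqr_ge0.
apply/matrixP => i j; rewrite !mxE (ord1 j).
move: (u0 i (mem_index_enum i)) => /implyP/(_ isT).
rewrite paddr_eq0 ?sqr_ge0 // !sqrf_eq0.
by case: (u i 0) => /= ? ? /andP[/eqP-> /eqP->].
Qed.

Lemma sqnormD u v : sqnorm (u + v) = sqnorm u + 2 * rinner u v + sqnorm v.
Proof. by rewrite /sqnorm rinnerDl !rinnerDr (rinnerC v u); ring. Qed.

Lemma sqnormN u : sqnorm (- u) = sqnorm u.
Proof. by rewrite /sqnorm rinnerNl rinnerNr opprK. Qed.

Lemma sqnormB u v : sqnorm (u - v) = sqnorm u - 2 * rinner u v + sqnorm v.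
Proof. by rewrite sqnormD sqnormN rinnerNr; ring. Qed.

Lemma sqnormZ (c : R) u : sqnorm (c%:C *: u) = c ^+ 2 * sqnorm u.
Proof. by rewrite /sqnorm rinnerZl rinnerZr mulrA -expr2. Qed.

Lemma sqnormBC u v : sqnorm (u - v) = sqnorm (v - u).
Proof. by rewrite -sqnormN opprB. Qed.

Lemma sqnormD_le u v : sqnorm (u + v) <= 2 * sqnorm u + 2 * sqnorm v.
Proof. by have := sqnorm_ge0 (u - v); rewrite sqnormB sqnormD; lra. Qed.

End RealInnerProduct.

Section Adjoint.
Variable R : realType.
Local Notation C := R[i].

Lemma adjM m n p (M : 'M[C]_(m, n)) (N : 'M[C]_(n, p)) : adj (M *m N) = adj N *m adj M.
Proof. by rewrite /adj map_mxM trmx_mul. Qed.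

Lemma adjK m n (M : 'M[C]_(m, n)) : adj (adj M) = M.
Proof. by apply/matrixP => i j; rewrite /adj !mxE conjcK. Qed.

Lemma rinner_adj m n (M : 'M[C]_(m, n)) (u : 'cV[C]_m) (v : 'cV[C]_n) :
  rinner (adj M *m u) v = rinner u (M *m v).
Proof. by rewrite /rinner adjM adjK mulmxA. Qed.

End Adjoint.

Section Regularizer.
Variables (R : realType) (U n : nat) (A : 'M[R[i]]_(U, n)) (g : R).
Implicit Types (u x z : 'cV[R[i]]_n).

Definition c1po_mx : 'M[R[i]]_n := 1%:M + (g^-1)%:C *: (adj A *m A).

Lemma c1po_mxE u : c1po_mx *m u = u + (g^-1)%:C *: (adj A *m (A *m u)).
Proof. by rewrite mulmxDl mul1mx -scalemxAl mulmxA. Qed.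

Lemma rinner_c1po_mx u : rinner u (c1po_mx *m u) = sqnorm u + g^-1 * sqnorm (A *m u).
Proof. by rewrite c1po_mxE rinnerDr rinnerZr rinnerC rinner_adj. Qed.

Lemma c1po_mx_unit : 0 < g -> c1po_mx \in unitmx.
Proof.
move=> g_gt0; rewrite -unitmx_tr unitmxE unitfE; apply/negP => /det0P[v v_neq0 vM].
have Mv : c1po_mx *m v^T = 0 by rewrite -[c1po_mx]trmxK -trmx_mul vM trmx0.
have := rinner_c1po_mx v^T; rewrite Mv /rinner mulmx0 mxE /= -/(sqnorm _).
have := sqnorm_ge0 v^T; have := sqnorm_ge0 (A *m v^T); have : 0 < g^-1 by rewrite invr_gt0.
move=> ginv_gt0 Av_ge0 v_ge0 v0.
have /sqnorm_eq0 vT0 : sqnorm v^T = 0 by nra.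
by move: v_neq0; rewrite -[v]trmxK vT0 trmx0 eqxx.
Qed.

Lemma c1po_mx_invK u : 0 < g -> c1po_mx *m (invmx c1po_mx *m u) = u.
Proof. by move=> g_gt0; rewrite mulmxA mulmxV ?mul1mx ?c1po_mx_unit. Qed.

Lemma sqnorm_c1po_inv_le u : 0 < g -> sqnorm (invmx c1po_mx *m u) <= sqnorm u.
Proof.
move=> g_gt0; set w := invmx c1po_mx *m u.
have -> : u = c1po_mx *m w by rewrite c1po_mx_invK.
rewrite c1po_mxE sqnormD sqnormZ rinnerZr rinnerC rinner_adj.
have := sqnorm_ge0 (A *m w); have := sqnorm_ge0 (adj A *m (A *m w)).
have : 0 < g^-1 by rewrite invr_gt0.
nra.
Qed.

Lemma c1po_mx_normal_eq z x : 0 < g -> c1po_mx *m z = x ->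
  adj A *m (A *m z) + g%:C *: (z - x) = 0.
Proof.
move=> g_gt0 <-; rewrite c1po_mxE opprD addNKr scalerN scalerA -rmorphM.
by rewrite mulfV ?gt_eqF // scale1r subrr.
Qed.

End Regularizer.

Lemma is_derive0_quadratic (R : realType) (a b c : R) :
  is_derive (0 : R) (1 : R) (fun h : R => a + h * b + h ^+ 2 * c) b.
Proof.
set p : {poly R} := a%:P + b *: 'X + c *: 'X^2.
have -> : (fun h : R => a + h * b + h ^+ 2 * c) = horner p.
  by apply/funext => h; rewrite /p !hornerD hornerC !hornerZ hornerX hornerXn; ring.
apply: is_derive_eq.
by rewrite /p !derivD derivC !derivZ derivX derivXn !hornerE.
Qed.

Lemma is_gradient_expansion (R : realType) n (f : 'cV[R[i]]_n -> R)
    (p q : 'cV[R[i]]_n) (Q : 'cV[R[i]]_n -> R) :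
  (forall w, f (p + w) = f p + rinner q w + Q w) ->
  (forall (h : R) w, Q (h%:C *: w) = h ^+ 2 * Q w) ->
  is_gradient f p q.
Proof.
move=> fE QZ v.
have -> : (fun h : R => f (p + h%:C *: v)) = (fun h => f p + h * rinner q v + h ^+ 2 * Q v).
  by apply/funext => h; rewrite fE rinnerZr QZ.
exact: is_derive0_quadratic.
Qed.

Section Energy.
Variables (R : realType) (U n : nat) (A : 'M[R[i]]_(U, n)) (g d : R).
Implicit Types (w x y z : 'cV[R[i]]_n).

Definition energy_grad_z z x := (2 : R)%:C *: (adj A *m (A *m z) + g%:C *: (z - x)).

Definition energy_grad_x z x := (2 * g)%:C *: (x - z) - (2 * d)%:C *: x.

Lemma energy_expand_z z x w : energy A g d (z + w) x =
  energy A g d z x + rinner (energy_grad_z z x) w + (sqnorm (A *m w) + g * sqnorm w).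
Proof.
rewrite /energy /energy_grad_z mulmxDr (addrAC z w) (sqnormD (A *m z)) (sqnormD (z - x) w).
by rewrite rinnerZl (rinnerDl (adj A *m _)) rinnerZl rinner_adj; ring.
Qed.

Lemma energy_expand_x z x w : energy A g d z (x + w) =
  energy A g d z x + rinner (energy_grad_x z x) w + (g - d) * sqnorm w.
Proof.
rewrite /energy /energy_grad_x opprD addrA (sqnormB (z - x) w) (sqnormD x w).
by rewrite !rinnerBl !rinnerZl !rinnerBl; ring.
Qed.

Lemma energy_gradient_z z x :
  is_gradient (fun z => energy A g d z x) z (energy_grad_z z x).
Proof.
apply: (is_gradient_expansion (Q := fun w => sqnorm (A *m w) + g * sqnorm w)).
  exact: energy_expand_z.
by move=> h w; rewrite -scalemxAr !sqnormZ; ring.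
Qed.

Lemma energy_gradient_x z x :
  is_gradient (fun x => energy A g d z x) x (energy_grad_x z x).
Proof.
apply: (is_gradient_expansion (Q := fun w => (g - d) * sqnorm w)).
  exact: energy_expand_x.
by move=> h w; rewrite sqnormZ; ring.
Qed.

Lemma energy_min_z z z' x : 0 <= g -> energy_grad_z z x = 0 ->
  energy A g d z x <= energy A g d z' x.
Proof.
move=> g_ge0 grad0; rewrite -(subrKC z z') energy_expand_z grad0 rinner0l.
have := sqnorm_ge0 (A *m (z' - z)); have := mulr_ge0 g_ge0 (sqnorm_ge0 (z' - z)).
lra.
Qed.

Lemma energy_descent_x z x y : 0 <= rinner (energy_grad_x z x) (y - x) ->
  energy A g d z x + (g - d) * sqnorm (y - x) <= energy A g d z y.
Proof. by move=> grad_ge0; rewrite -{2}(subrKC x y) energy_expand_x; lra. Qed.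

End Energy.

Section Projection.
Variables (R : realType) (n : nat) (g d l : R).
Implicit Types (u v y z : 'cV[R[i]]_n).

Lemma c1po_proj_inbox z : 0 < d -> d < g -> 0 <= l -> inbox l (c1po_proj g d l z).
Proof. by move=> d_gt0 d_lt_g l_ge0 i; rewrite mxE /=; split; apply: c1po_proj1_bound. Qed.

Lemma c1po_proj_first_order z y : 0 < d -> d < g -> inbox l y ->
  0 <= rinner (energy_grad_x g d z (c1po_proj g d l z)) (y - c1po_proj g d l z).
Proof.
move=> d_gt0 d_lt_g y_box; rewrite rinnerE; apply: sumr_ge0 => i _.
have [y_re y_im] := y_box i.
rewrite !mxE /= !(ReD, ImD, ReN, ImN, ReZ, ImZ) /=.
by rewrite addr_ge0 // c1po_proj1_first_order.
Qed.

Lemma c1po_proj_lipschitz u v : 0 < d -> d < g -> 0 <= l ->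
  sqnorm (c1po_proj g d l u - c1po_proj g d l v) <= (g / (g - d)) ^+ 2 * sqnorm (u - v).
Proof.
move=> d_gt0 d_lt_g l_ge0; rewrite !sqnormE mulr_sumr; apply: ler_sum => i _.
rewrite !mxE /= !(ReD, ImD, ReN, ImN) /= mulrDr.
by apply: lerD; apply: c1po_proj1_lipschitz.
Qed.

Lemma inbox_sqnorm_le y : inbox l y -> sqnorm y <= (l ^+ 2 *+ 2) *+ n.
Proof.
move=> y_box; rewrite sqnormE -[n in _ *+ n]card_ord -sumr_const; apply: ler_sum => i _.
have [] := y_box i; rewrite !ler_norml => /andP[? ?] /andP[? ?].
by rewrite mulr2n; apply: lerD; nra.
Qed.

End Projection.

Lemma c1po_fixed_point_stationary (R : realType) U n (A : 'M[R[i]]_(U, n)) (g d l : R)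
    (zs xs : 'cV[R[i]]_n) :
  0 < d -> d < g -> 0 <= l ->
  c1po_mx A g *m zs = xs -> xs = c1po_proj g d l zs ->
  stationary A g d l zs xs.
Proof.
move=> d_gt0 d_lt_g l_ge0 zsE xsE; have g_gt0 : 0 < g by lra.
split; first by rewrite xsE; exact: c1po_proj_inbox.
split.
  exists (energy_grad_z A g zs xs); split; first exact: energy_gradient_z.
  by rewrite /energy_grad_z c1po_mx_normal_eq ?scaler0.
exists (energy_grad_x g d zs xs); split; first exact: energy_gradient_x.
by move=> y y_box; rewrite rinnerNl oppr_le0 xsE; exact: c1po_proj_first_order.
Qed.

Lemma sqnorm_eq0_le_eps (R : realType) n (v : 'cV[R[i]]_n) (K : R) : 0 < K ->
  (forall eps, 0 < eps -> sqnorm v <= K * eps) -> v = 0.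
Proof.
move=> K_gt0 v_small; apply: sqnorm_eq0; apply/eqP; rewrite eq_le sqnorm_ge0 andbT.
apply/ler_addgt0Pr => e e_gt0; rewrite add0r.
by have := v_small (e / K) (divr_gt0 e_gt0 K_gt0); rewrite mulrC divfK ?gt_eqF.
Qed.

Lemma lipschitz_approx_eq (R : realType) n (F : 'cV[R[i]]_n -> 'cV[R[i]]_n) (K : R)
    (a b : 'cV[R[i]]_n) :
  0 <= K -> (forall u v, sqnorm (F u - F v) <= K * sqnorm (u - v)) ->
  (forall eps, 0 < eps -> exists u, sqnorm (u - a) < eps /\ sqnorm (F u - b) < eps) ->
  F a = b.
Proof.
move=> K_ge0 F_lip approx; apply/eqP; rewrite -subr_eq0; apply/eqP.
apply: (@sqnorm_eq0_le_eps _ _ _ (2 * K + 2)); first lra.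
move=> eps eps_gt0; have [u [ua Fub]] := approx eps eps_gt0.
have := sqnormD_le (F a - F u) (F u - b); rewrite addrA subrK.
have := F_lip a u; rewrite (sqnormBC a u).
have : K * sqnorm (u - a) <= K * eps by rewrite ler_wpM2l // ltW.
lra.
Qed.

Lemma descent_steps_vanish (R : realType) (e s : nat -> R) (T : nat) (L : R) :
  (forall t, (T <= t)%N -> 0 <= s t /\ e t.+1 + s t <= e t) ->
  (forall t, (T <= t)%N -> L <= e t) ->
  forall eps, 0 < eps -> exists N, forall t, (N <= t)%N -> s t < eps.
Proof.
move=> descent e_lb eps eps_gt0.
have e_mono t k : (T <= t)%N -> e (t + k)%N <= e t.
  move=> Tt; elim: k => [|k IHk]; first by rewrite addn0.
  rewrite addnS; have [s_ge0 e_dec] := descent _ (leq_trans Tt (leq_addr k t)); lra.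
pose S := [set e t | t in [set t | (T <= t)%N]]%classic.
have S_inf : has_inf S.
  by split; [exists (e T), T => /= | exists L => _ [t Tt <-]; exact: e_lb].
have [_ [t0 Tt0 <-] e_t0] := inf_adherent eps_gt0 S_inf.
exists t0 => t t0t; have Tt := leq_trans Tt0 t0t.
have inf_le : inf S <= e t.+1 by apply: (ge_inf S_inf.2); exists t.+1 => //; exact: leqW.
have := e_mono t0 (t - t0)%N Tt0; rewrite subnKC //.
by have [_ e_dec] := descent t Tt; lra.
Qed.

Section Iteration.
Variables (R : realType) (U n : nat) (A : 'M[R[i]]_(U, n)) (g d l : R).
Variables (x z : nat -> 'cV[R[i]]_n) (xs zs : 'cV[R[i]]_n).
Hypotheses (d_gt0 : 0 < d) (d_lt_g : d < g) (l_ge0 : 0 <= l).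
Hypothesis c1po_step : forall t, (1 <= t)%N ->
  z t.+1 = invmx (c1po_mx A g) *m x t /\ x t.+1 = c1po_proj g d l (z t.+1).
Hypothesis limit_xz : limit_point x z xs zs.

Local Notation energy_at t := (energy A g d (z t) (x t)).

Lemma c1po_iter_inbox t : (2 <= t)%N -> inbox l (x t).
Proof. by case: t => // t t_ge2; rewrite (c1po_step t_ge2).2; apply: c1po_proj_inbox. Qed.

Lemma c1po_iter_descent t : (2 <= t)%N ->
  energy_at t.+1 + (g - d) * sqnorm (x t - x t.+1) <= energy_at t.
Proof.
move=> t_ge2; have [zE xE] := c1po_step (ltnW t_ge2).
have g_ge0 : 0 <= g by rewrite ltW // (lt_trans d_gt0).
have z_step : energy A g d (z t.+1) (x t) <= energy_at t.
  apply: energy_min_z g_ge0 _.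
  by rewrite /energy_grad_z c1po_mx_normal_eq ?scaler0 ?zE ?c1po_mx_invK // (lt_trans d_gt0).
have x_step : energy_at t.+1 + (g - d) * sqnorm (x t - x t.+1) <= energy A g d (z t.+1) (x t).
  apply: energy_descent_x; rewrite xE; apply: c1po_proj_first_order => //.
  exact: c1po_iter_inbox.
exact: le_trans x_step z_step.
Qed.

Lemma c1po_iter_energy_lb t : (2 <= t)%N -> - d * ((l ^+ 2 *+ 2) *+ n) <= energy_at t.
Proof.
move=> t_ge2; have := inbox_sqnorm_le (c1po_iter_inbox t_ge2).
have := sqnorm_ge0 (A *m z t); have := sqnorm_ge0 (z t - x t).
have := d_gt0; have := d_lt_g; rewrite /energy; nra.
Qed.

Lemma c1po_iter_steps_vanish eps : 0 < eps ->
  exists N, forall t, (N <= t)%N -> sqnorm (x t - x t.+1) < eps.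
Proof.
move=> eps_gt0; have gd_gt0 : 0 < g - d by rewrite subr_gt0.
have [|N small] := descent_steps_vanish
  (s := fun t => (g - d) * sqnorm (x t - x t.+1)) (T := 2) _ c1po_iter_energy_lb
  (mulr_gt0 gd_gt0 eps_gt0).
  move=> t t_ge2; split; last exact: c1po_iter_descent.
  exact: mulr_ge0 (ltW gd_gt0) (sqnorm_ge0 _).
by exists N => t Nt; rewrite -(ltr_pM2l gd_gt0) small.
Qed.

Lemma c1po_limit_proj : xs = c1po_proj g d l zs.
Proof.
apply/esym/(lipschitz_approx_eq (K := (g / (g - d)) ^+ 2)).
- exact: sqr_ge0.
- by move=> u v; apply: c1po_proj_lipschitz.
move=> eps eps_gt0; have [[|t] [//= t_ge2 close]] := limit_xz eps_gt0 2.
have := sqnorm_ge0 (x t.+1 - xs); have := sqnorm_ge0 (z t.+1 - zs).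
by exists (z t.+1); rewrite -(c1po_step t_ge2).2; split; lra.
Qed.

Lemma c1po_limit_mx : c1po_mx A g *m zs = xs.
Proof.
have g_gt0 : 0 < g by rewrite (lt_trans d_gt0).
suff <- : invmx (c1po_mx A g) *m xs = zs by rewrite c1po_mx_invK.
apply: (lipschitz_approx_eq (K := 1)) => // [u v|eps eps_gt0].
  by rewrite -mulmxBr mul1r sqnorm_c1po_inv_le.
have eps4_gt0 : 0 < eps / 4 by rewrite divr_gt0.
have [N small] := c1po_iter_steps_vanish eps4_gt0.
have [[|t] [//= Nt close]] := limit_xz eps4_gt0 N.+2.
have t_ge1 : (1 <= t)%N := leq_ltn_trans (leq0n N) Nt.
exists (x t); rewrite -(c1po_step t_ge1).1.
have := sqnormD_le (x t - x t.+1) (x t.+1 - xs); rewrite addrA subrK.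
have := small t (ltnW Nt); have := sqnorm_ge0 (x t.+1 - xs); have := sqnorm_ge0 (z t.+1 - zs).
by split; lra.
Qed.

End Iteration.

Theorem theorem1 (R : realType) (U B : nat) (P gamma delta : R)
    (H : 'M[R[i]]_(U, B)) (s : 'cV[R[i]]_U)
    (x z : nat -> 'cV[R[i]]_B) (xs zs : 'cV[R[i]]_B) :
  (0 < U)%N -> (U <= B)%N -> 0 < P -> s != 0 ->
  0 < delta -> delta < gamma ->
  let A := Qmat s *m H in
  let ell := Num.sqrt (P / (2 * B%:R)) in
  x 1%N = adj H *m s ->
  (forall t : nat, (1 <= t)%N ->
     z t.+1 = invmx (1%:M + ((gamma^-1)%R)%:C *: (adj A *m A)) *m x t /\
     x t.+1 = c1po_proj gamma delta ell (z t.+1)) ->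
  limit_point x z xs zs ->
  stationary A gamma delta ell zs xs.
Proof.
move=> _ _ _ _ d_gt0 d_lt_g A ell _ step limit_xz.
have l_ge0 : 0 <= ell by apply: sqrtr_ge0.
apply: c1po_fixed_point_stationary => //.
- exact: c1po_limit_mx d_gt0 d_lt_g l_ge0 step limit_xz.
- exact: c1po_limit_proj d_gt0 d_lt_g l_ge0 step limit_xz.
Qed.
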